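(* For an integer $k \geq 1$ let $X^{(k)}, X^{(k)}_1, X^{(k)}_2, \ldots$ be i.i.d.\ random variables with $\mathbb{P}\{X^{(k)} = 2^i\} = \frac{2^{-i}}{1-2^{-k}}$ for $i = 1, \ldots, k$, and let $S^{(k)}_n = X^{(k)}_1 + \cdots + X^{(k)}_n$. For $n \geq 1$ let $\gamma_n = n / 2^{\lceil \log_2 n\rceil} \in (1/2,1]$. For $x \geq 0$ put \[ h(x) = (2+x)\ln\left(1 + \frac{x}{2}\right) - x. \] Then for any $n \geq 1$, any integer $j \geq 1 - \lceil \log_2 n \rceil$ and any $x \geq 0$, \[ \mathbb{P}\left\{ S_n^{(\lceil \log_2 n\rceil + j)} - \mathbb{E} S_n^{(\lceil \log_2 n\rceil + j)} > n x \right\} \leq e^{-h(x)/\eta_{j,\gamma_n}}, \] where $\eta_{j,\gamma} = 2^j \gamma^{-1}$.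
   Context: $X^{(k)}$ has the conditional law of a St.~Petersburg variable $X$ (with $\mathbb{P}\{X=2^i\}=2^{-i}$, $i \in \mathbb{N}$) given $X \leq 2^k$. $\lceil \cdot \rceil$ denotes the upper integer part. *)

From mathcomp Require Import all_boot all_order all_algebra.
From mathcomp Require Import all_classical all_reals all_analysis.
Set Implicit Arguments. Unset Strict Implicit. Unset Printing Implicit Defensive.
Import Order.TTheory GRing.Theory Num.Theory.
Local Open Scope ring_scope.

(* ceil(log_2 n) for n >= 1: smallest e with n <= 2^e. *)
Definition clog2 (n : nat) : nat := up_log 2 n.

(* Truncated St. Petersburg law: P{X^(k) = 2^(i+1)} = 2^-(i+1)/(1-2^-k), i : 'I_k. *)
Definition pk (R : realType) (k : nat) (i : 'I_k) : R :=
  (2%:R ^- i.+1) / (1 - 2%:R ^- k).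

Definition valk (R : realType) (k : nat) (i : 'I_k) : R := (2 ^ i.+1)%:R.

Definition EXk (R : realType) (k : nat) : R := \sum_(i < k) pk R i * valk R i.

(* S_n^(k) on the product space 'I_k^n of n i.i.d. copies *)
Definition Snk (R : realType) (n k : nat) (t : {ffun 'I_n -> 'I_k}) : R :=
  \sum_(m < n) valk R (t m).

Definition tail_prob (R : realType) (n k : nat) (x : R) : R :=
  \sum_(t : {ffun 'I_n -> 'I_k})
     (\prod_(m < n) pk R (t m)) *
     (if Snk R t - n%:R * EXk R k > n%:R * x then 1 else 0).

Definition gamma_n (R : realType) (n : nat) : R := n%:R / (2 ^ clog2 n)%:R.

Definition h (R : realType) (x : R) : R := (2 + x) * ln (1 + x / 2) - x.

Definition eta (R : realType) (j : int) (g : R) : R := (2%:R : R) ^ j / g.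

From mathcomp Require Import all_boot all_order all_algebra.
From mathcomp Require Import ring lra zify.
From mathcomp Require Import all_classical all_reals all_analysis.
Import Order.TTheory GRing.Theory Num.Theory numFieldNormedType.Exports.
Local Open Scope ring_scope.

(* Chernoff's bound with [lam = ln (1 + x/2) / 2^k].  With
   [phi u = e^u - 1 - u], the inequality [4 phi u <= phi (2u)] makes
   [phi (lam t) / t^2] nondecreasing along powers of two, so every value
   [t = 2^i <= 2^k] of [X^(k)] satisfies
   [e^(lam t) <= 1 + lam t + (t / 2^k)^2 phi (lam 2^k)].
   Since [E (X^(k))^2 = 2 * 2^k], this gives
   [E e^(lam X^(k)) <= exp (lam E X^(k) + 2^(1-k) phi (lam 2^k))],
   and the choice of [lam] turns the exponent of the Chernoff bound into
   [- n h(x) / 2^k = - h(x) / eta_{j, gamma_n}] for [k = clog2 n + j]. *)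

Section ExpRemainder.
Context {R : realType}.

Definition expR_rem (u : R) : R := expR u - 1 - u.

Lemma expR_rem_double (w : R) : 0 <= w -> 4 * expR_rem w <= expR_rem (2 * w).
Proof.
move=> w0; pose psi u : R := expR (2 * u) - 4 * expR u + 2 * u.
have psi' (u : R) : is_derive u (1 : R) psi (2 * (expR u - 1) ^+ 2).
  rewrite /psi; apply: trigger_derive.
  by rewrite expRM_natl /GRing.scale /=; field.
have : psi 0 <= psi w.
  apply: (@ger0_derive1_ndecry _ psi 0) => //.
  - by move=> u _; rewrite derive1E derive_val mulr_ge0 ?sqr_ge0.
  - apply: continuous_subspaceT => u; have [d _] := psi' u.
    by apply: differentiable_continuous; exact/derivable1_diffP.
rewrite /psi /expR_rem mulr0 expR0; lra.
Qed.

Lemma expR_rem_pow2 (m : nat) (v : R) :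
  0 <= v -> (2 ^+ m) ^+ 2 * expR_rem v <= expR_rem (v * 2 ^+ m).
Proof.
move=> v0; elim: m => [|m IH]; first by rewrite !expr0 expr1n mul1r mulr1.
have vm0 : 0 <= v * 2 ^+ m by rewrite mulr_ge0 ?exprn_ge0.
have -> : v * 2 ^+ m.+1 = 2 * (v * 2 ^+ m) by rewrite exprSr; ring.
apply: le_trans (expR_rem_double _ vm0).
have -> : (2 ^+ m.+1) ^+ 2 = 4 * (2 ^+ m) ^+ 2 :> R.
  by rewrite [2 ^+ m.+1]exprSr exprMn mulrC; congr (_ * _); rewrite expr2; lra.
by rewrite -mulrA ler_wpM2l.
Qed.

Lemma expR_rem_pow2_le {lam : R} {i k : nat} : 0 <= lam -> (i <= k)%N ->
  (2 ^+ k) ^+ 2 * expR_rem (lam * 2 ^+ i) <= (2 ^+ i) ^+ 2 * expR_rem (lam * 2 ^+ k).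
Proof.
move=> lam0 ik; rewrite -(subnK ik); set m := (k - i)%N.
rewrite exprD (mulrC (2 ^+ m)) exprMn -mulrA (mulrA lam).
apply: ler_wpM2l; first exact: exprn_ge0.
by apply: expR_rem_pow2; rewrite mulr_ge0 ?exprn_ge0.
Qed.

End ExpRemainder.

Section TruncatedStPetersburg.
Context {R : realType}.

Lemma sum_inv2_powS (k : nat) : \sum_(i < k) (2 : R) ^- i.+1 = 1 - 2 ^- k.
Proof.
elim: k => [|k IH]; first by rewrite big_ord0 expr0 invr1 subrr.
rewrite big_ord_recr /= IH exprSr invfM; field; rewrite expf_neq0 // pnatr_eq0.
Qed.

Lemma sum_2_powS (k : nat) : \sum_(i < k) (2 : R) ^+ i.+1 = 2 ^+ k.+1 - 2.
Proof.
elim: k => [|k IH]; first by rewrite big_ord0 expr1 subrr.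
by rewrite big_ord_recr /= IH [in RHS]exprS; ring.
Qed.

Lemma one_sub_inv2X_gt0 (k : nat) : (0 < k)%N -> 0 < 1 - (2 : R) ^- k.
Proof.
move=> k0; rewrite subr_gt0 invf_lt1 ?exprn_gt0 // exprn_egt1 ?ltr1n //.
by rewrite -lt0n.
Qed.

Lemma pk_ge0 (k : nat) (i : 'I_k) : 0 <= pk R i.
Proof.
have k0 : (0 < k)%N := leq_ltn_trans (leq0n i) (ltn_ord i).
by rewrite /pk divr_ge0 ?invr_ge0 ?exprn_ge0 // ltW // one_sub_inv2X_gt0.
Qed.

Lemma sum_pk (k : nat) : (0 < k)%N -> \sum_(i < k) pk R i = 1.
Proof.
move=> k0; rewrite /pk -mulr_suml sum_inv2_powS divff //.
exact/lt0r_neq0/one_sub_inv2X_gt0.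
Qed.

Lemma sum_pk_valk_sqr (k : nat) : (0 < k)%N ->
  \sum_(i < k) pk R i * valk R i ^+ 2 = 2 * 2 ^+ k.
Proof.
move=> k0; have twoX0 : (2 : R) ^+ k != 0 by rewrite expf_neq0.
have twoX1 : (2 : R) ^+ k - 1 != 0.
  by rewrite subr_eq0 gt_eqF // exprn_egt1 ?ltr1n // -lt0n.
rewrite (eq_bigr (fun i : 'I_k => (2 : R) ^+ i.+1 / (1 - 2 ^- k))); last first.
  by move=> i _; rewrite /pk /valk natrX; field; rewrite twoX0 twoX1 expf_neq0.
by rewrite -mulr_suml sum_2_powS exprSr; field; rewrite twoX0 twoX1.
Qed.

End TruncatedStPetersburg.

Section Chernoff.
Context {R : realType}.

Lemma mgf_pk_le (k : nat) (lam : R) : (0 < k)%N -> 0 <= lam ->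
  \sum_(i < k) pk R i * expR (lam * valk R i)
    <= expR (lam * EXk R k + 2 / 2 ^+ k * expR_rem (lam * 2 ^+ k)).
Proof.
move=> k0 lam0; set b : R := 2 ^+ k; set c := expR_rem (lam * b) / b ^+ 2.
have b0 : b != 0 by rewrite expf_neq0.
have expR_valk (i : 'I_k) :
    expR (lam * valk R i) <= 1 + lam * valk R i + valk R i ^+ 2 * c.
  have := expR_rem_pow2_le lam0 (ltn_ord i).
  rewrite /valk natrX -/b mulrA -ler_pdivlMl ?exprn_gt0 // mulrC -/c /expR_rem.
  lra.
apply: le_trans (expR_ge1Dx _).
apply: (@le_trans _ _ (\sum_(i < k) pk R i * (1 + lam * valk R i + valk R i ^+ 2 * c))).
  by apply: ler_sum => i _; apply: ler_wpM2l; [exact: pk_ge0 | exact: expR_valk].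
have -> : \sum_(i < k) pk R i * (1 + lam * valk R i + valk R i ^+ 2 * c) =
    \sum_(i < k) pk R i + lam * EXk R k + (\sum_(i < k) pk R i * valk R i ^+ 2) * c.
  rewrite /EXk mulr_sumr mulr_suml -!big_split /=.
  by apply: eq_bigr => i _; ring.
rewrite sum_pk // sum_pk_valk_sqr // /c -/b.
by rewrite le_eqVlt; apply: predU1l; field.
Qed.

Lemma sum_ffun_prod (n k : nat) (f : 'I_k -> R) :
  \sum_(t : {ffun 'I_n -> 'I_k}) \prod_(m < n) f (t m) = (\sum_(i < k) f i) ^+ n.
Proof. by rewrite -(bigA_distr_bigA (fun _ => f)) prodr_const card_ord. Qed.

Lemma tail_prob_le_mgf (n k : nat) (x lam : R) : 0 <= lam ->
  tail_prob n k x <= expR (- (lam * (n%:R * EXk R k + n%:R * x))) *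
     (\sum_(i < k) pk R i * expR (lam * valk R i)) ^+ n.
Proof.
move=> lam0; set c := n%:R * EXk R k + n%:R * x.
have markov (t : {ffun 'I_n -> 'I_k}) :
    (if Snk R t - n%:R * EXk R k > n%:R * x then 1 else 0) <= expR (lam * (Snk R t - c)).
  case: ifPn => [tail|_]; last exact: expR_ge0.
  apply: le_trans (expR_ge1Dx _); rewrite lerDl mulr_ge0 // /c; lra.
apply: (@le_trans _ _ (\sum_(t : {ffun 'I_n -> 'I_k})
    (\prod_(m < n) pk R (t m)) * expR (lam * (Snk R t - c)))).
  apply: ler_sum => t _; apply: ler_wpM2l (markov t).
  by apply: prodr_ge0 => m _; exact: pk_ge0.
rewrite -(sum_ffun_prod n k (fun i => pk R i * expR (lam * valk R i))) mulr_sumr.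
apply: ler_sum => t _.
rewrite [in X in _ <= X]big_split /= /Snk mulrBr expRD mulr_sumr expR_sum.
by rewrite [X in _ <= X]mulrC -mulrA.
Qed.

Lemma tail_prob_le (n k : nat) (x : R) : (0 < k)%N -> 0 <= x ->
  tail_prob n k x <= expR (- (n%:R / 2 ^+ k * h x)).
Proof.
move=> k0 x0; set b : R := 2 ^+ k; set L := ln (1 + x / 2).
have b0 : 0 < b by rewrite exprn_gt0.
have L0 : 0 <= L by apply: ln_ge0; lra.
have lam0 : 0 <= L / b by rewrite divr_ge0 // ltW.
have eL : expR L = 1 + x / 2 by rewrite lnK // posrE; lra.
apply: le_trans (tail_prob_le_mgf n k x _ lam0) _.
have mgf0 : 0 <= \sum_(i < k) pk R i * expR (L / b * valk R i).
  by apply: sumr_ge0 => i _; rewrite mulr_ge0 ?pk_ge0 ?expR_ge0.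
apply: le_trans (ler_wpM2l (expR_ge0 _) (lerXn2r n _ _ (mgf_pk_le k _ k0 lam0))) _.
- by rewrite nnegrE.
- by rewrite nnegrE expR_ge0.
rewrite -expRM_natl -expRD ler_expR /expR_rem -/b divfK ?lt0r_neq0 // eL /h -/L.
by rewrite le_eqVlt; apply: predU1l; field; rewrite lt0r_neq0.
Qed.

End Chernoff.

Theorem lemma1 (R : realType) (n : nat) (j : int) (x : R) :
  (1 <= n)%N ->
  1 - (clog2 n)%:Z <= j ->
  0 <= x ->
  @tail_prob R n (absz ((clog2 n)%:Z + j)) x
    <= expR (- h x / eta j (gamma_n R n)).
Proof.
move=> n1 hj x0; set c := clog2 n; set k := absz (c%:Z + j).
have kE : c%:Z + j = k%:Z by rewrite /k gez0_abs //; lia.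
have k0 : (0 < k)%N by rewrite -ltz_nat -kE; lia.
have n0 : (n%:R : R) != 0 by rewrite pnatr_eq0 -lt0n.
have etaE : eta j (gamma_n R n) = 2 ^+ k / n%:R.
  have twoXk : (2 : R) ^ j * 2 ^+ c = 2 ^+ k.
    by rewrite -[2 ^+ c]/(2 ^ c%:Z) -expfzDr // addrC kE.
  by rewrite /eta /gamma_n natrX -/c -twoXk; field; rewrite n0 expf_neq0.
apply: le_trans (tail_prob_le n k x k0 x0) _.
by rewrite etaE ler_expR le_eqVlt; apply: predU1l; field; rewrite n0 expf_neq0.
Qed.
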